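(* Let $A(0)=1$ and $A(n)=nA(n-1)+1$ for $n\ge1$ (so $A(n)=\sum_{r=0}^n n!/r!$). For every integer $M>0$, the sequence $(A(n)\bmod M)_{n\ge0}$ is periodic with period exactly $M$. *)

From mathcomp Require Import all_boot.

Fixpoint A (n : nat) : nat :=
  match n with
  | 0 => 1
  | k.+1 => k.+1 * A k + 1
  end.

Definition is_period_mod (M p : nat) : Prop :=
  forall n, A (n + p) = A n %[mod M].

From mathcomp Require Import all_boot.

(* The recurrence A(n+1) = (n+1) A(n) + 1 only sees n modulo M, so a shift p
   that is a multiple of M with A(p) = A(0) (mod M) preserves A mod M; and
   A(M) = M A(M-1) + 1 = 1 = A(0) (mod M).  Conversely a period p gives
   A(p) = 1, hence A(p+1) = (p+1) A(p) + 1 = p + 2, while A(1) = 2, so M | p. *)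

Lemma A_mod_self M : A M = 1 %[mod M].
Proof. by case: M => // m; rewrite /= -modnDml modnMr. Qed.

Lemma is_period_mod_of_dvd M p :
  M %| p -> A p = 1 %[mod M] -> is_period_mod M p.
Proof.
case/dvdnP=> k -> Ap n; elim: n => [|n IH] //=.
have shift : (n + k * M).+1 = n.+1 %[mod M] by rewrite -addSn addnC modnMDl.
by rewrite -modnDml -modnMml -modnMmr IH shift modnMmr modnMml modnDml.
Qed.

Lemma dvd_of_is_period_mod M p : is_period_mod M p -> M %| p.
Proof.
move=> per.
have A0 : A p = 1 %[mod M] := per 0.
have A1 : p.+1 * A p + 1 = 2 %[mod M] := per 1.
have : 0 + 2 = p + 2 %[mod M].
  by rewrite -A1 -modnDml -modnMmr A0 modnMmr muln1 modnDml addn1 addn2.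
by move/eqP; rewrite eqn_modDr mod0n eq_sym.
Qed.

Theorem propositionA5 (M : nat) (hM : 0 < M) :
  is_period_mod M M /\ (forall p, 0 < p -> is_period_mod M p -> M <= p).
Proof.
split; first exact: is_period_mod_of_dvd (dvdnn M) (A_mod_self M).
by move=> p p_gt0 /dvd_of_is_period_mod/dvdn_leq; apply.
Qed.
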